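(* If $H$ is a $2$-regular uniform hypergraph, then the Graver basis of $I_H$ is the unique minimal generating set of $I_H$.
   Context: A hypergraph $H$ has vertex set $V=\{1,\dots,n\}$ and a set $E(H)$ of edges, each a nonempty subset of $V$ (no repeated edges). It is uniform if all edges have the same size and $2$-regular if every vertex lies in exactly two edges. For a field $K$, the toric ideal $I_H$ is the kernel of $\phi_H: K[t_e : e\in E(H)]\to K[x_1,\dots,x_n]$, $t_e\mapsto\prod_{j\in e}x_j$. The Graver basis of $I_H$ is the set of primitive binomials of $I_H$, where a binomial $u-v\in I_H$ ($u,v$ monomials) is primitive if there is no other binomial $u'-v'\in I_H$ with $u'\mid u$ and $v'\mid v$. ''Unique minimal generating set'' means the Graver basis generates $I_H$ minimally and every minimal binomial generating set of $I_H$ coincides with it up to the signs of its elements. *)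

From HB Require Import structures.
From mathcomp Require Import all_boot all_order all_algebra.
From mathcomp Require Import mpoly.
Set Implicit Arguments. Unset Strict Implicit. Unset Printing Implicit Defensive.
Import GRing.Theory.
Local Open Scope ring_scope.

Definition is_hypergraph (n m : nat) (edge : 'I_m -> {set 'I_n}) : Prop :=
  injective edge /\ (forall e, edge e != set0).

Definition uniform_hg (n m : nat) (edge : 'I_m -> {set 'I_n}) : Prop :=
  exists d : nat, forall e, #|edge e| = d.

Definition two_regular_hg (n m : nat) (edge : 'I_m -> {set 'I_n}) : Prop :=
  forall j : 'I_n, #|[set e | j \in edge e]| = 2.

Definition phiH (K : fieldType) (n m : nat) (edge : 'I_m -> {set 'I_n})
  (p : {mpoly K[m]}) : {mpoly K[n]} :=
  comp_mpoly [tuple \prod_(j in edge e) 'X_j | e < m] p.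

Definition toric_ideal (K : fieldType) (n m : nat) (edge : 'I_m -> {set 'I_n})
  (p : {mpoly K[m]}) : Prop := phiH edge p = 0.

Definition binom (K : fieldType) (m : nat) (u v : 'X_{1..m}) : {mpoly K[m]} :=
  'X_[u] - 'X_[v].

Definition is_binomial (K : fieldType) (m : nat) (p : {mpoly K[m]}) : Prop :=
  exists u v : 'X_{1..m}, p = binom K u v.

Definition mdivides (m : nat) (u' u : 'X_{1..m}) : Prop :=
  forall i : 'I_m, (u' i <= u i)%N.

Definition primitive_binomial (K : fieldType) (n m : nat)
  (edge : 'I_m -> {set 'I_n}) (p : {mpoly K[m]}) : Prop :=
  exists u v : 'X_{1..m},
    [/\ p = binom K u v, u <> v, toric_ideal edge p &
        forall u' v' : 'X_{1..m}, u' <> v' ->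
          toric_ideal edge (binom K u' v') ->
          mdivides u' u -> mdivides v' v -> binom K u' v' = p].

Definition graver_basis (K : fieldType) (n m : nat) (edge : 'I_m -> {set 'I_n})
  : {mpoly K[m]} -> Prop := primitive_binomial edge.

Definition in_gen_ideal (R : comNzRingType) (S : R -> Prop) (p : R) : Prop :=
  exists s : seq (R * R), (forall x, x \in s -> S x.2) /\
                          p = \sum_(x <- s) x.1 * x.2.

Definition generates (R : comNzRingType) (S I : R -> Prop) : Prop :=
  forall p, in_gen_ideal S p <-> I p.

(* S is a minimal generating set of I: it generates I and no element
   of S lies in the ideal generated by the other elements (equivalently,
   no proper subset of S generates I). *)
Definition minimal_generating_set (R : comNzRingType) (S I : R -> Prop) : Prop :=
  generates S I /\
  forall s, S s -> ~ in_gen_ideal (fun q => S q /\ q <> s) s.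

Definition eq_up_to_sign (R : comNzRingType) (S G : R -> Prop) : Prop :=
  (forall s, S s -> G s \/ G (- s)) /\ (forall g, G g -> S g \/ S (- g)).

(* "G is the unique minimal generating set of I": G (with one sign chosen for
   each element) generates I minimally, and every minimal binomial generating
   set of I coincides with G up to signs. *)
Definition unique_minimal_generating_set (K : fieldType) (m : nat)
  (G I : {mpoly K[m]} -> Prop) : Prop :=
  (exists S, minimal_generating_set S I /\ eq_up_to_sign S G
             /\ (forall s, S s -> G s)) /\
  (forall S, minimal_generating_set S I -> (forall s, S s -> is_binomial s) ->
             eq_up_to_sign S G).

From mathcomp Require Import all_boot all_order all_algebra.
From mathcomp Require Import mpoly zify.
From Stdlib Require Import Classical_Prop.
Set Implicit Arguments. Unset Strict Implicit. Unset Printing Implicit Defensive.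
Import GRing.Theory.
Local Open Scope ring_scope.

(* Every vertex lies in exactly two edges x and y, so t^u - t^v lies in I_H iff
   u x + u y = v x + v y whenever x and y meet.  Hence u - v has nonzero
   entries of alternating sign along a whole connected component of the line
   graph, and the primitive binomials are exactly t^P - t^Q for the two sides
   P, Q of a component whose meeting edges always lie on opposite sides.
   Such a binomial is indispensable: any binomial of I_H used to generate it
   has a monomial dividing t^P, and the alternation forces that binomial to be
   +-(t^P - t^Q).  As the Graver basis always generates I_H, it is the unique
   minimal generating set. *)

Section GeneratedIdeal.
Variable R : comNzRingType.
Implicit Types (T : R -> Prop) (p q : R).

Lemma in_gen_ideal0 T : in_gen_ideal T 0.
Proof. by exists [::]; rewrite big_nil. Qed.

Lemma in_gen_idealD T p q :
  in_gen_ideal T p -> in_gen_ideal T q -> in_gen_ideal T (p + q).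
Proof.
case=> s1 [T1 ->] [s2 [T2 ->]]; exists (s1 ++ s2); rewrite big_cat.
by split=> // x; rewrite mem_cat => /orP[/T1|/T2].
Qed.

Lemma in_gen_idealMl T c p : in_gen_ideal T p -> in_gen_ideal T (c * p).
Proof.
case=> s [Ts ->]; exists [seq (c * x.1, x.2) | x <- s]; split.
  by move=> x /mapP[y /Ts Ty ->].
by rewrite big_map mulr_sumr; apply: eq_bigr => x _; rewrite mulrA.
Qed.

Lemma in_gen_ideal_gen T q : T q -> in_gen_ideal T q.
Proof.
by move=> Tq; exists [:: (1, q)]; rewrite big_seq1 mul1r; split=> // x /[!inE] /eqP ->.
Qed.

Lemma in_gen_ideal_genN T q : T q \/ T (- q) -> in_gen_ideal T q.
Proof.
case=> [/in_gen_ideal_gen //|/in_gen_ideal_gen/(in_gen_idealMl (-1))].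
by rewrite mulN1r opprK.
Qed.

Lemma in_gen_ideal_sum T (I : Type) (r : seq I) (P : pred I) (F : I -> R) :
  (forall i, P i -> in_gen_ideal T (F i)) ->
  in_gen_ideal T (\sum_(i <- r | P i) F i).
Proof. by move=> TF; apply: big_ind => //; [exact: in_gen_ideal0|exact: in_gen_idealD]. Qed.

Lemma in_gen_ideal_trans T1 T2 p :
  (forall q, T1 q -> in_gen_ideal T2 q) -> in_gen_ideal T1 p -> in_gen_ideal T2 p.
Proof.
move=> T12 [s [Ts ->]]; rewrite big_seq.
by apply: in_gen_ideal_sum => x /Ts/T12; apply: in_gen_idealMl.
Qed.

Lemma in_gen_ideal_kernel (S : pzRingType) (f : {rmorphism R -> S}) T p :
  (forall q, T q -> f q = 0) -> in_gen_ideal T p -> f p = 0.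
Proof.
move=> fT [s [Ts ->]]; rewrite rmorph_sum big_seq big1 // => x /Ts/fT fx.
by rewrite rmorphM fx mulr0.
Qed.

End GeneratedIdeal.

Section SignRepresentatives.
Variable V : zmodType.
Implicit Types (G : V -> Prop) (s : V).

Definition sign_rep s : V := choose (fun q => (q == s) || (q == - s)) s.

Lemma sign_repN s : sign_rep (- s) = sign_rep s.
Proof.
rewrite /sign_rep (@eq_choose _ _ (fun q => (q == s) || (q == - s))).
  by apply: choose_id; rewrite eqxx ?orbT.
by move=> q /=; rewrite opprK orbC.
Qed.

Lemma sign_repP s : sign_rep s = s \/ sign_rep s = - s.
Proof.
have /orP[/eqP|/eqP] : (sign_rep s == s) || (sign_rep s == - s).
  by apply: (@chooseP _ (fun q => (q == s) || (q == - s))); rewrite eqxx.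
all: by [left | right].
Qed.

Definition sign_reps G s := G s /\ sign_rep s = s.

Lemma sign_reps_cover G g :
  (forall g, G g -> G (- g)) -> G g -> sign_reps G g \/ sign_reps G (- g).
Proof.
move=> GN Gg; have [eg|eg] := sign_repP g; first by left.
by right; split; [exact: GN | rewrite sign_repN].
Qed.

Lemma sign_repsN G s : sign_reps G s -> sign_reps G (- s) -> - s = s.
Proof. by move=> [_ es] [_ eNs]; rewrite -eNs sign_repN. Qed.

End SignRepresentatives.

Section UniqueMinimalGeneration.
Variables (K : fieldType) (m : nat) (G I : {mpoly K[m]} -> Prop).
Hypothesis I_ideal :
  forall T p, (forall q, T q -> I q) -> in_gen_ideal T p -> I p.
Hypothesis G_binomial : forall g, G g -> I g /\ is_binomial g.
Hypothesis I_gen : forall p, I p -> in_gen_ideal G p.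
Hypothesis GN : forall g, G g -> G (- g).
Hypothesis G_indispensable : forall T g,
  (forall q, T q -> I q /\ is_binomial q) -> G g -> in_gen_ideal T g ->
  exists2 q, T q & q = g \/ q = - g.

Lemma sign_reps_generates : generates (sign_reps G) I.
Proof.
move=> p; split; first by apply: I_ideal => q [/G_binomial[]].
move=> /I_gen; apply: in_gen_ideal_trans => g Gg.
exact/in_gen_ideal_genN/sign_reps_cover.
Qed.

Lemma sign_reps_minimal : minimal_generating_set (sign_reps G) I.
Proof.
split; first exact: sign_reps_generates.
move=> s Ss s_gen.
have others_ok q : sign_reps G q /\ q <> s -> I q /\ is_binomial q.
  by move=> [[/G_binomial]].
have [q [Sq neq_qs] [qE|qE]] := G_indispensable others_ok Ss.1 s_gen.
  exact: neq_qs.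
by apply: neq_qs; rewrite qE in Sq *; apply: sign_repsN Ss Sq.
Qed.

Lemma minimal_binomial_generating_set_signs S :
  minimal_generating_set S I -> (forall s, S s -> is_binomial s) ->
  eq_up_to_sign S G.
Proof.
move=> [S_gen S_min] S_binomial.
have S_ideal q : S q -> I q /\ is_binomial q.
  by split; [apply/S_gen/in_gen_ideal_gen | exact: S_binomial].
have G_S g : G g -> S g \/ S (- g).
  move=> Gg; have g_gen : in_gen_ideal S g by apply/S_gen; case: (G_binomial Gg).
  have [q Sq [<-|<-]] := G_indispensable S_ideal Gg g_gen; first by left.
  by right.
split=> [s Ss|//]; apply: NNPP => not_G; apply: (S_min s Ss).
apply: in_gen_ideal_trans (I_gen (S_ideal s Ss).1) => g Gg.
apply: in_gen_ideal_genN; case: (G_S g Gg) => [Sg|SNg]; [left|right].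
  by split=> // gs; apply: not_G; left; rewrite -gs.
by split=> // gs; apply: not_G; right; rewrite -gs opprK.
Qed.

Lemma unique_minimal_generating_setP : unique_minimal_generating_set G I.
Proof.
split; last exact: minimal_binomial_generating_set_signs.
exists (sign_reps G); split; first exact: sign_reps_minimal.
split; last by move=> s [].
by split=> [s [Gs _]|g]; [left|exact: sign_reps_cover].
Qed.

End UniqueMinimalGeneration.

Section Binomials.
Variables (K : fieldType) (m : nat).
Implicit Types (u v w z : 'X_{1..m}) (p c : {mpoly K[m]}).

Lemma mpolyX_inj : injective (fun u => 'X_[u] : {mpoly K[m]}).
Proof.
move=> u v /(congr1 (mcoeff u)); rewrite !mcoeffX eqxx.
by case: eqP => // _ /eqP; rewrite oner_eq0.
Qed.

Lemma mcoeff_mulX_mdivides c u z : (c * 'X_[u])@_z != 0 -> mdivides u z.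
Proof.
rewrite -mcoeff_msupp (perm_mem (msuppMX c u)) => /mapP[w _ ->] i.
by rewrite mnmDE leq_addr.
Qed.

Lemma mcoeff_mul_binom c u v z :
  (c * binom K u v)@_z != 0 -> mdivides u z \/ mdivides v z.
Proof.
rewrite /binom mulrBr mcoeffB.
have [Xu0|/mcoeff_mulX_mdivides] := eqVneq (c * 'X_[u])@_z 0; last by left.
have [Xv0|/mcoeff_mulX_mdivides] := eqVneq (c * 'X_[v])@_z 0; last by right.
by rewrite Xu0 Xv0 subrr eqxx.
Qed.

Lemma in_gen_ideal_mcoeff (T : {mpoly K[m]} -> Prop) p z :
  in_gen_ideal T p -> p@_z != 0 -> exists2 q, T q & exists c, (c * q)@_z != 0.
Proof.
case=> s [Ts ->]; rewrite raddf_sum /= => nz.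
have /hasP[x xs xz] : has (fun x => (x.1 * x.2)@_z != 0) s.
  apply: contraNT nz => /hasPn x0; apply/eqP.
  by rewrite big1_seq // => x /x0 /negPn /eqP.
by exists x.2; [exact: Ts | exists x.1].
Qed.

End Binomials.

Section Indicator.
Variable m : nat.
Implicit Types (u v w : 'X_{1..m}) (P Q : {set 'I_m}).

Definition chi P : 'X_{1..m} := [multinom (e \in P : nat) | e < m].

Lemma chiE P e : chi P e = (e \in P).
Proof. by rewrite mnmE. Qed.

Lemma chi_inj : injective chi.
Proof.
move=> P Q /mnmP PQ; apply/setP => e; have := PQ e.
by rewrite !chiE; case: (e \in P); case: (e \in Q).
Qed.

Lemma chi0 : chi set0 = 0%MM.
Proof. by apply/mnmP => e; rewrite chiE mnm0E inE. Qed.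

Lemma mdivides_anti u w : mdivides u w -> mdivides w u -> u = w.
Proof. by move=> uw wu; apply/mnmP => e; apply/eqP; rewrite eqn_leq uw wu. Qed.

Lemma chi_mdivides u v P : {in P, forall e, v e < u e}%N -> mdivides (chi P) u.
Proof. by move=> Pvu e; rewrite chiE; case: (boolP (e \in P)) => // /Pvu; lia. Qed.

Lemma mdivides_chi_sub u v P P' :
  mdivides u (chi P) -> {in P', forall e, v e < u e}%N -> P' \subset P.
Proof.
move=> uP P'vu; apply/subsetP => e /P'vu vu; have := uP e.
by rewrite chiE; case: (e \in P) => //=; lia.
Qed.

Definition mdist u v := (\sum_(e < m) (u e - v e + (v e - u e)))%N.

Lemma mdist_swap u v P Q a : [disjoint P & Q] -> a \in P ->
  {in P, forall e, v e < u e}%N -> {in Q, forall e, u e < v e}%N ->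
  (mdist (u - chi P + chi Q) v < mdist u v)%N.
Proof.
move=> dPQ aP Pvu Quv.
set u' := (u - chi P + chi Q)%MM.
have le_e e : (u' e - v e + (v e - u' e) + (e \in P) <= u e - v e + (v e - u e))%N.
  rewrite /u' mnmDE mnmBE !chiE.
  case: (boolP (e \in P)) => [eP|_].
    by rewrite (disjointFr dPQ eP); have := Pvu e eP; lia.
  by case: (boolP (e \in Q)) => [/Quv|_] /=; lia.
rewrite /mdist (bigD1 a) //= [X in (_ < X)%N](bigD1 a) //=.
have := le_e a; rewrite aP => lt_a.
rewrite -addSn; apply: leq_add; first by move: lt_a; rewrite /nat_of_bool addn1.
by apply: leq_sum => e _; have := le_e e; lia.
Qed.

End Indicator.

Section TwoRegularHypergraph.
Variables (K : fieldType) (n m : nat) (edge : 'I_m -> {set 'I_n}).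
Implicit Types (u v w : 'X_{1..m}) (P Q : {set 'I_m}) (p q g : {mpoly K[m]}).

Definition edges_at (j : 'I_n) : {set 'I_m} := [set e | j \in edge e].

(* [Amul u] is the product A u of the vertex-edge incidence matrix A of the
   hypergraph with the exponent vector u, i.e. the exponent of phi_H (t^u). *)
Definition Amul u : 'X_{1..n} := [multinom (\sum_(e in edges_at j) u e)%N | j < n].

Lemma AmulE u j : Amul u j = (\sum_(e in edges_at j) u e)%N.
Proof. by rewrite mnmE. Qed.

Lemma AmulD u v : Amul (u + v) = (Amul u + Amul v)%MM.
Proof.
by apply/mnmP => j; rewrite mnmDE !AmulE -big_split; apply: eq_bigr => e _; rewrite mnmDE.
Qed.

Lemma Amul0 : Amul 0 = 0%MM.
Proof. by apply/mnmP => j; rewrite AmulE mnm0E big1 // => e _; rewrite mnm0E. Qed.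

Lemma phiH_X u : phiH edge ('X_[u] : {mpoly K[m]}) = 'X_[Amul u].
Proof.
rewrite /phiH comp_mpolyX.
under eq_bigr => e _ do rewrite tnth_mktuple mprodXE mpolyXn.
rewrite mprodXE; congr 'X_[_]; apply/mnmP => j.
rewrite AmulE mnm_sumE [RHS]big_mkcond; apply: eq_bigr => e _ /=.
rewrite mulmnE mnm_sumE inE.
case: (boolP (j \in edge e)) => je.
  rewrite (bigD1 j) //= mnm1E eqxx big1 ?addn0 ?mul1n // => i /andP[_ ij].
  by rewrite mnm1E (negbTE ij).
by rewrite big1 ?mul0n // => i ie; rewrite mnm1E; case: eqP => // ij; rewrite -ij ie in je.
Qed.

Lemma toric_binomP u v : toric_ideal edge (binom K u v) <-> Amul u = Amul v.
Proof.
rewrite /toric_ideal /binom /phiH comp_mpolyB -!/(phiH edge _) !phiH_X.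
split=> [/eqP|->]; last exact: subrr.
by rewrite subr_eq0 => /eqP/mpolyX_inj.
Qed.

Lemma toric_ideal_closed (T : {mpoly K[m]} -> Prop) p :
  (forall q, T q -> toric_ideal edge q) -> in_gen_ideal T p -> toric_ideal edge p.
Proof. exact: in_gen_ideal_kernel. Qed.

(* Adjacency in the line graph, as long as the hypergraph is 2-regular. *)
Definition adj : rel 'I_m :=
  fun x y => (x != y) && [exists j, edges_at j == [set x; y]].

Lemma adj_sym : ssrbool.symmetric adj.
Proof. by move=> x y; rewrite /adj eq_sym setUC. Qed.

Definition component (a : 'I_m) : {set 'I_m} := [set e | connect adj a e].

Let adj_connect_sym := sym_connect_sym adj_sym.

Lemma mem_component a : a \in component a.
Proof. by rewrite inE connect0. Qed.

Lemma component_sub (X : {set 'I_m}) a :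
  (forall x y, adj x y -> x \in X -> y \in X) -> a \in X -> component a \subset X.
Proof.
move=> /(intro_closed adj_connect_sym) X_closed aX.
by apply/subsetP => e; rewrite inE => /(closed_connect X_closed) <-.
Qed.

Lemma component_eq a x : x \in component a -> component x = component a.
Proof.
rewrite inE => ax; apply/setP => e; rewrite !inE.
by rewrite (same_connect adj_connect_sym ax).
Qed.

Lemma Amul_pair u j x y : x != y -> edges_at j = [set x; y] ->
  Amul u j = (u x + u y)%N.
Proof. by move=> xy ej; rewrite AmulE ej big_setU1 ?big_set1 // inE. Qed.

Lemma Amul_adj u v x y : Amul u = Amul v -> adj x y ->
  (u x + u y = v x + v y)%N.
Proof.
move=> uv /andP[xy /existsP[j /eqP ej]].
by rewrite -!(Amul_pair _ xy ej) uv.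
Qed.

Hypothesis edge_neq0 : forall e, edge e != set0.
Hypothesis two_regular : two_regular_hg edge.

Lemma edges_atP j : exists x y, x != y /\ edges_at j = [set x; y].
Proof. exact/cards2P/eqP/two_regular. Qed.

Lemma Amul_eq0 w : Amul w = 0%MM -> w = 0%MM.
Proof.
move=> /mnmP w0; apply/mnmP => e; rewrite mnm0E.
have /set0Pn[j je] := edge_neq0 e; have /eqP := w0 j.
by rewrite AmulE mnm0E (bigD1 e) ?inE //= addn_eq0 => /andP[/eqP].
Qed.

Lemma Amul_mdivides_eq u w : mdivides w u -> Amul u = Amul w -> u = w.
Proof.
move=> wu; rewrite -[u](@submK _ w u); last exact/mnm_lepP.
rewrite AmulD -{2}[Amul w]add0m => /addIm/Amul_eq0 ->.
exact: add0m.
Qed.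

(* For disjoint P and Q, the equation on [Amul] says that the two edges
   through every vertex of the component lie on opposite sides. *)
Definition bipartition P Q :=
  [/\ [disjoint P & Q], Amul (chi P) = Amul (chi Q) &
      exists a, P :|: Q = component a].

Lemma bipartition_sym P Q : bipartition P Q -> bipartition Q P.
Proof. by case=> dPQ APQ [a PQa]; split; rewrite 1?disjoint_sym 1?setUC //; exists a. Qed.

Lemma bipartition_component P Q z : bipartition P Q -> z \in P :|: Q ->
  P :|: Q = component z.
Proof. by case=> _ _ [a ->] /component_eq ->. Qed.

Lemma bipartition_adj P Q x y : bipartition P Q -> x \in P -> adj x y -> y \in Q.
Proof.
case=> dPQ APQ _ xP /(Amul_adj APQ); rewrite !chiE xP (disjointFr dPQ xP).
by case: (y \in P); case: (y \in Q).
Qed.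

Lemma bipartition_neq0 P Q : bipartition P Q -> P != set0.
Proof.
move=> bPQ; apply/negP => /eqP P0; case: bPQ => _ APQ [a PQa].
have Q0 : Q = set0.
  by apply: chi_inj; rewrite chi0; apply: Amul_eq0; rewrite -APQ P0 chi0 Amul0.
by have := mem_component a; rewrite -PQa P0 Q0 setU0 inE.
Qed.

Lemma bipartition_chi_neq P Q : bipartition P Q -> chi P != chi Q.
Proof.
move=> bPQ; have /set0Pn[a aP] := bipartition_neq0 bPQ; case: bPQ => dPQ _ _.
by apply/eqP => /chi_inj PQ; move: (disjointFr dPQ aP); rewrite -PQ aP.
Qed.


Lemma bipartition_of_lt u v x : Amul u = Amul v -> (v x < u x)%N ->
  exists P Q, [/\ bipartition P Q,
    {in P, forall e, v e < u e}%N & {in Q, forall e, u e < v e}%N].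
Proof.
move=> Auv vux.
pose P := [set e in component x | v e < u e]%N.
pose Q := [set e in component x | u e < v e]%N.
have neq_uv : component x \subset [set e | u e != v e].
  apply: component_sub; last by rewrite inE gtn_eqF.
  by move=> a b /(Amul_adj Auv); rewrite !inE; lia.
exists P, Q; split; last 2 first.
- by move=> e; rewrite inE => /andP[].
- by move=> e; rewrite inE => /andP[].
split.
- rewrite -setI_eq0; apply/eqP/setP => e; rewrite !inE.
  by case: (connect adj x e) => //=; lia.
- apply/mnmP => j; have [y [z [yz ej]]] := edges_atP j.
  rewrite !(Amul_pair _ yz ej) !chiE !inE.
  have adj_yz : adj y z by rewrite /adj yz; apply/existsP; exists j; rewrite ej.
  have adj_zy : adj z y by rewrite adj_sym.
  rewrite (same_connect_r adj_connect_sym (connect1 adj_zy)).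
  by case: (connect adj x y); have := Amul_adj Auv adj_yz; rewrite /=; lia.
- exists x; apply/setP => e; rewrite !inE -andb_orr.
  case: (boolP (connect adj x e)) => //= xe.
  by have := subsetP neq_uv e; rewrite !inE xe => /(_ isT); lia.
Qed.

Lemma bipartition_of_diff u v : Amul u = Amul v -> u <> v ->
  exists P Q, [/\ bipartition P Q,
    {in P, forall e, v e < u e}%N & {in Q, forall e, u e < v e}%N].
Proof.
move=> Auv neq_uv; have [x] : exists x, u x != v x.
  apply/existsP; rewrite -negb_forall; apply: contra_notN neq_uv => /forallP uv.
  by apply/mnmP => e; apply/eqP.
case: ltngtP => [uvx|vux|//] _; last exact: bipartition_of_lt Auv vux.
have [P [Q [bPQ Pvu Quv]]] := bipartition_of_lt (esym Auv) uvx.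
by exists Q, P; split=> //; apply: bipartition_sym.
Qed.

Lemma bipartition_sub P Q P' Q' z : bipartition P Q -> bipartition P' Q' ->
  z \in P -> z \in P' -> (P \subset P') && (Q \subset Q').
Proof.
move=> bPQ bPQ' zP zP'.
pose X := (P :&: P') :|: (Q :&: Q').
have X_closed x y : adj x y -> x \in X -> y \in X.
  move=> xy; rewrite !inE => /orP[/andP[xP xP'] | /andP[xQ xQ']].
    by rewrite (bipartition_adj bPQ xP xy) (bipartition_adj bPQ' xP' xy) orbT.
  by rewrite (bipartition_adj (bipartition_sym bPQ) xQ xy)
             (bipartition_adj (bipartition_sym bPQ') xQ' xy).
have /subsetP PQ_X : P :|: Q \subset X.
  rewrite (bipartition_component bPQ (_ : z \in P :|: Q)) ?inE ?zP //.
  by apply: component_sub X_closed _; rewrite !inE zP zP'.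
case: bPQ => dPQ _ _; apply/andP; split; apply/subsetP => e e_in.
  by have := PQ_X e; rewrite !inE e_in (disjointFr dPQ e_in) /= orbF; apply.
by have := PQ_X e; rewrite !inE e_in (disjointFl dPQ e_in) orbT; apply.
Qed.

Lemma bipartition_eq P Q P' Q' z : bipartition P Q -> bipartition P' Q' ->
  z \in P -> z \in P' -> P = P' /\ Q = Q'.
Proof.
move=> bPQ bPQ' zP zP'.
case/andP: (bipartition_sub bPQ bPQ' zP zP') => PP' QQ'.
case/andP: (bipartition_sub bPQ' bPQ zP' zP) => P'P Q'Q.
by split; apply/eqP; rewrite eqEsubset ?PP' ?QQ'.
Qed.

Lemma bipartition_mdivides P Q u v : bipartition P Q -> Amul u = Amul v -> u <> v ->
  mdivides u (chi P) -> u = chi P /\ v = chi Q.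
Proof.
move=> bPQ Auv neq_uv uP.
have [P' [Q' [bPQ' P'vu Q'uv]]] := bipartition_of_diff Auv neq_uv.
have /set0Pn[z zP'] := bipartition_neq0 bPQ'.
have zP : z \in P by apply: subsetP (mdivides_chi_sub uP P'vu) z zP'.
have [eP eQ] := bipartition_eq bPQ bPQ' zP zP'; subst P' Q'.
have uE : u = chi P by apply: mdivides_anti uP (chi_mdivides P'vu).
split=> //; apply: Amul_mdivides_eq (chi_mdivides Q'uv) _.
by case: bPQ => _ <- _; rewrite -Auv uE.
Qed.

Lemma primitive_bipartition P Q :
  bipartition P Q -> primitive_binomial edge (binom K (chi P) (chi Q)).
Proof.
move=> bPQ; exists (chi P), (chi Q); split=> //.
- exact/eqP/bipartition_chi_neq.
- by apply/toric_binomP; case: bPQ.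
move=> u v neq_uv /toric_binomP Auv uP vQ.
by have [-> ->] := bipartition_mdivides bPQ Auv neq_uv uP.
Qed.

Lemma primitive_binomialP p : primitive_binomial edge p ->
  exists P Q, bipartition P Q /\ p = binom K (chi P) (chi Q).
Proof.
case=> u [v [-> neq_uv /toric_binomP Auv primitive_uv]].
have [P [Q [bPQ Pvu Quv]]] := bipartition_of_diff Auv neq_uv.
exists P, Q; split=> //; symmetry; apply: primitive_uv.
- exact/eqP/bipartition_chi_neq.
- by apply/toric_binomP; case: bPQ.
- exact: chi_mdivides Pvu.
- exact: chi_mdivides Quv.
Qed.

Lemma primitive_binomialN p :
  primitive_binomial edge p -> primitive_binomial edge (- p).
Proof.
case/primitive_binomialP=> P [Q [/bipartition_sym bQP ->]].
by rewrite /binom opprB; apply: primitive_bipartition.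
Qed.

Lemma primitive_toric p :
  primitive_binomial edge p -> toric_ideal edge p /\ is_binomial p.
Proof. by case=> u [v [-> _ toric_uv _]]; split=> //; exists u, v. Qed.

Lemma primitive_indispensable (T : {mpoly K[m]} -> Prop) g :
  (forall q, T q -> toric_ideal edge q /\ is_binomial q) ->
  primitive_binomial edge g -> in_gen_ideal T g -> exists2 q, T q & q = g \/ q = - g.
Proof.
move=> T_toric /primitive_binomialP[P [Q [bPQ ->]]] g_gen.
have : (binom K (chi P) (chi Q))@_(chi P) != 0.
  rewrite /binom mcoeffB !mcoeffX eqxx (negbTE (bipartition_chi_neq (bipartition_sym bPQ))).
  by rewrite subr0 oner_eq0.
case/(in_gen_ideal_mcoeff g_gen)=> q Tq [c].
have [toric_q [u [v qE]]] := T_toric q Tq; rewrite qE in Tq toric_q *.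
move/toric_binomP: toric_q => Auv.
have [<-|/eqP neq_uv] := eqVneq u v; first by rewrite /binom subrr mulr0 mcoeff0 eqxx.
move=> /mcoeff_mul_binom[uP|vP]; apply: (ex_intro2 _ _ _ Tq).
  by have [-> ->] := bipartition_mdivides bPQ Auv neq_uv uP; left.
have [-> ->] := bipartition_mdivides bPQ (esym Auv) (nesym neq_uv) vP.
by right; rewrite /binom opprB.
Qed.

Definition toric_binomial q := exists u v, Amul u = Amul v /\ q = binom K u v.

Lemma toric_binomial_in_primitive_ideal u v : Amul u = Amul v ->
  in_gen_ideal (primitive_binomial edge) (binom K u v).
Proof.
have [k] := ubnP (mdist u v); elim: k u => // k IH u dist_lt Auv.
have [<-|/eqP neq_uv] := eqVneq u v; first by rewrite /binom subrr; apply: in_gen_ideal0.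
have [P [Q [bPQ Pvu Quv]]] := bipartition_of_diff Auv neq_uv.
have /set0Pn[a aP] := bipartition_neq0 bPQ.
set u0 := (u - chi P)%MM.
have uE : u = (u0 + chi P)%MM.
  by rewrite /u0 submK //; apply/mnm_lepP; apply: chi_mdivides Pvu.
have -> : binom K u v = 'X_[u0] * binom K (chi P) (chi Q) + binom K (u0 + chi Q) v.
  by rewrite /binom {1}uE !mpolyXD mulrBr addrA subrK.
apply: in_gen_idealD; first exact/in_gen_idealMl/in_gen_ideal_gen/primitive_bipartition.
case: bPQ => dPQ APQ _; apply: IH; last by rewrite AmulD -APQ -AmulD -uE.
by have := mdist_swap dPQ aP Pvu Quv; rewrite -/u0; lia.
Qed.

Definition fiber_rep u : 'X_{1..m} :=
  xchoose (ex_intro (fun w => Amul w == Amul u) u (eqxx _)).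

Lemma Amul_fiber_rep u : Amul (fiber_rep u) = Amul u.
Proof. exact/eqP/(xchooseP (ex_intro (fun w => Amul w == Amul u) u (eqxx _))). Qed.

Lemma fiber_rep_eq u w : Amul u = Amul w -> fiber_rep u = fiber_rep w.
Proof. by move=> Auw; apply: eq_xchoose => x; rewrite Auw. Qed.

Lemma fiber_repE u w : fiber_rep u = u -> (fiber_rep w == u) = (Amul w == Amul u).
Proof.
by move=> uu; apply/eqP/eqP => [<-|/fiber_rep_eq ->]; rewrite ?Amul_fiber_rep.
Qed.

(* Representatives of distinct fibers are distinct monomials with distinct
   images, so no cancellation can happen under phi_H. *)
Lemma phiH_fiber_reps_eq0 (s : seq 'X_{1..m}) (c : 'X_{1..m} -> K) :
  phiH edge (\sum_(w <- s) c w *: 'X_[fiber_rep w]) = 0 ->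
  \sum_(w <- s) c w *: 'X_[fiber_rep w] = 0.
Proof.
rewrite /phiH raddf_sum /=.
under eq_bigr => w _ do rewrite comp_mpolyZ -/(phiH edge _) phiH_X Amul_fiber_rep.
move=> phi0; apply/mpolyP => z; rewrite mcoeff0 raddf_sum /=.
have [zz|zNz] := eqVneq (fiber_rep z) z.
  move/(congr1 (mcoeff (Amul z))): phi0; rewrite raddf_sum mcoeff0 /= => phi0.
  rewrite -[RHS]phi0.
  by apply: eq_bigr => w _; rewrite !mcoeffZ !mcoeffX fiber_repE.
rewrite big1 // => w _; rewrite mcoeffZ mcoeffX.
case: eqP => [wz|_]; last by rewrite mulr0.
by move: zNz; rewrite -wz (fiber_rep_eq (Amul_fiber_rep w)) eqxx.
Qed.

Lemma toric_in_toric_binomial_ideal p :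
  toric_ideal edge p -> in_gen_ideal toric_binomial p.
Proof.
move=> toric_p; set r := \sum_(w <- msupp p) p@_w *: 'X_[fiber_rep w].
set b := \sum_(w <- msupp p) (p@_w)%:MP * binom K w (fiber_rep w).
have pE : p = b + r.
  rewrite /b /r -big_split /= {1}(mpolyE p); apply: eq_bigr => w _.
  by rewrite /binom mulrBr !mul_mpolyC subrK.
have b_gen : in_gen_ideal toric_binomial b.
  apply: in_gen_ideal_sum => w _; apply/in_gen_idealMl/in_gen_ideal_gen.
  by exists w, (fiber_rep w); rewrite Amul_fiber_rep.
have toric_b : toric_ideal edge b.
  by apply: toric_ideal_closed b_gen => q [u [v [Auv ->]]]; apply/toric_binomP.
have phi_r : phiH edge r = 0.
  move: toric_p toric_b; rewrite /toric_ideal /phiH pE raddfD /= => phi_p phi_b.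
  by rewrite phi_b add0r in phi_p.
have r0 : r = 0 := phiH_fiber_reps_eq0 phi_r.
by rewrite pE r0 addr0.
Qed.

Lemma toric_in_primitive_ideal p :
  toric_ideal edge p -> in_gen_ideal (primitive_binomial edge) p.
Proof.
move/toric_in_toric_binomial_ideal; apply: in_gen_ideal_trans.
by move=> q [u [v [Auv ->]]]; apply: toric_binomial_in_primitive_ideal.
Qed.

End TwoRegularHypergraph.

Theorem proposition4p2 (K : fieldType) (n m : nat) (edge : 'I_m -> {set 'I_n}) :
  is_hypergraph edge -> uniform_hg edge -> two_regular_hg edge ->
  unique_minimal_generating_set (@graver_basis K n m edge) (@toric_ideal K n m edge).
Proof.
move=> [_ edge_neq0] _ two_regular.
apply: unique_minimal_generating_setP.
- exact: toric_ideal_closed.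
- exact: primitive_toric.
- exact: toric_in_primitive_ideal.
- exact: primitive_binomialN.
- exact: primitive_indispensable.
Qed.
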